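(* Let $(X,\tau)$ be a $\mathbb{B}$-topological space. (i) If $(X,\tau)$ is $T_1$, then the topological space $(X,\tau[tt]\vee\tau[ff])$ is $T_1$. (ii) If both topological spaces $(X,\tau[tt])$ and $(X,\tau[ff])$ are $T_1$, then $(X,\tau)$ is $T_1$.
   Context: $\mathbb{B}=\{0,1,tt,ff\}$ is the four-element Boolean algebra with bottom $0$, top $1$, and $tt,ff$ incomparable complements; $a\to b=\neg a\vee b$. A $\mathbb{B}$-topology on $X$ is $\tau\subseteq\mathbb{B}^X$ containing all constant maps and closed under arbitrary pointwise joins and finite pointwise meets; $\tau[b]=\{\lambda[b]:\lambda\in\tau\}$ with $\lambda[b]=\{x:\lambda(x)\ge b\}$; $\tau[tt]\vee\tau[ff]$ is the topology generated by $\tau[tt]\cup\tau[ff]$. Specialization $\mathbb{B}$-order: $\Omega(\tau)(x,y)=\bigwedge_{\lambda\in\tau}(\lambda(x)\to\lambda(y))$. $(X,\tau)$ is $R_0$ if $\Omega(\tau)$ is symmetric, $T_0$ if $\Omega(\tau)(x,y)=1=\Omega(\tau)(y,x)$ implies $x=y$, and $T_1$ if it is both $T_0$ and $R_0$. *)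

From Stdlib Require Import Classical ClassicalEpsilon.

Inductive B4 : Type := B0 | B1 | Btt | Bff.

Definition ble (a b : B4) : bool :=
  match a, b with
  | B0, _ => true
  | _, B1 => true
  | Btt, Btt => true
  | Bff, Bff => true
  | _, _ => false
  end.

Definition bmeet (a b : B4) : B4 :=
  match a, b with
  | B1, c => c
  | c, B1 => c
  | Btt, Btt => Btt
  | Bff, Bff => Bff
  | _, _ => B0
  end.

Definition bjoin (a b : B4) : B4 :=
  match a, b with
  | B0, c => c
  | c, B0 => c
  | Btt, Btt => Btt
  | Bff, Bff => Bff
  | _, _ => B1
  end.

Definition bneg (a : B4) : B4 :=
  match a with B0 => B1 | B1 => B0 | Btt => Bff | Bff => Btt end.

Definition bimp (a b : B4) : B4 := bjoin (bneg a) b.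

(* Arbitrary meets/joins of a subset S of the (finite) lattice B. *)
Definition bmeetS (S : B4 -> Prop) : B4 :=
  let f b := if excluded_middle_informative (S b) then b else B1 in
  bmeet (f B0) (bmeet (f B1) (bmeet (f Btt) (f Bff))).

Definition bjoinS (S : B4 -> Prop) : B4 :=
  let f b := if excluded_middle_informative (S b) then b else B0 in
  bjoin (f B0) (bjoin (f B1) (bjoin (f Btt) (f Bff))).

Definition is_Btopology {X : Type} (tau : (X -> B4) -> Prop) : Prop :=
  (forall c : B4, tau (fun _ => c)) /\
  (forall F : (X -> B4) -> Prop, (forall l, F l -> tau l) ->
     tau (fun x => bjoinS (fun b => exists l, F l /\ b = l x))) /\
  (forall l m, tau l -> tau m -> tau (fun x => bmeet (l x) (m x))).

Definition Omega {X : Type} (tau : (X -> B4) -> Prop) (x y : X) : B4 :=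
  bmeetS (fun b => exists l, tau l /\ b = bimp (l x) (l y)).

Definition BR0 {X : Type} (tau : (X -> B4) -> Prop) : Prop :=
  forall x y, Omega tau x y = Omega tau y x.

Definition BT0 {X : Type} (tau : (X -> B4) -> Prop) : Prop :=
  forall x y, Omega tau x y = B1 -> Omega tau y x = B1 -> x = y.

Definition BT1 {X : Type} (tau : (X -> B4) -> Prop) : Prop :=
  BT0 tau /\ BR0 tau.

(* lambda[b] = {x | lambda x >= b} ; tau[b] = {lambda[b] | lambda in tau} *)
Definition cut {X : Type} (l : X -> B4) (b : B4) : X -> Prop :=
  fun x => ble b (l x) = true.

Definition cutTop {X : Type} (tau : (X -> B4) -> Prop) (b : B4) : (X -> Prop) -> Prop :=
  fun U => exists l, tau l /\ U = cut l b.

Definition is_topology {X : Type} (T : (X -> Prop) -> Prop) : Prop :=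
  T (fun _ => True) /\
  (forall F : (X -> Prop) -> Prop, (forall V, F V -> T V) ->
     T (fun x => exists V, F V /\ V x)) /\
  (forall U V, T U -> T V -> T (fun x => U x /\ V x)).

Definition gen_top {X : Type} (S : (X -> Prop) -> Prop) : (X -> Prop) -> Prop :=
  fun U => forall T, is_topology T -> (forall V, S V -> T V) -> T U.

Definition join_top {X : Type} (T1 T2 : (X -> Prop) -> Prop) : (X -> Prop) -> Prop :=
  gen_top (fun U => T1 U \/ T2 U).

Definition T1space {X : Type} (T : (X -> Prop) -> Prop) : Prop :=
  forall x y : X, x <> y -> exists U, T U /\ U x /\ ~ U y.

(* An element of B is determined by the atoms tt, ff below it, and for an atom
   c the condition c <= Omega(tau)(x, y) says exactly that every c-cut of tau
   containing x contains y.  So Omega(tau)(x, y) <> 1 yields an open set of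
   tau[tt] or of tau[ff] separating x from y, which gives (i); conversely, if
   both cut topologies are T1 then Omega(tau)(x, y) = 0 for all x <> y, which
   makes Omega(tau) symmetric and T0, which gives (ii).  Neither direction uses
   the closure properties of a B-topology. *)
From Stdlib Require Import Classical ClassicalEpsilon.

Definition is_atom (c : B4) : Prop := c = Btt \/ c = Bff.

Lemma atom_tt : is_atom Btt.
Proof. now left. Qed.

Lemma atom_ff : is_atom Bff.
Proof. now right. Qed.

Lemma atom_le_bmeetS (c : B4) (S : B4 -> Prop) : is_atom c ->
  ble c (bmeetS S) = true <-> (forall b, S b -> ble c b = true).
Proof.
  unfold bmeetS; intros [-> | ->];
  destruct (excluded_middle_informative (S B0)) as [S0 | S0];
  destruct (excluded_middle_informative (S B1)) as [S1 | S1];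
  destruct (excluded_middle_informative (S Btt)) as [St | St];
  destruct (excluded_middle_informative (S Bff)) as [Sf | Sf];
  simpl; split; intros H; try discriminate; try reflexivity;
  try (intros [] Hb; first [reflexivity | contradiction]);
  first [ discriminate (H _ S0) | discriminate (H _ St) | discriminate (H _ Sf) ].
Qed.

Lemma atom_le_bimp (c a b : B4) : is_atom c ->
  ble c (bimp a b) = true <-> (ble c a = true -> ble c b = true).
Proof. intros [-> | ->]; destruct a, b; simpl; intuition discriminate. Qed.

Lemma atom_le_Omega {X : Type} (tau : (X -> B4) -> Prop) (c : B4) (x y : X) :
  is_atom c ->
  ble c (Omega tau x y) = true <->
  (forall l, tau l -> cut l c x -> cut l c y).
Proof.
  intros Hc; unfold Omega, cut; rewrite (atom_le_bmeetS _ _ Hc); split.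
  - intros H l Hl; apply (atom_le_bimp _ _ _ Hc), H; now exists l.
  - intros H b [l [Hl ->]]; apply (atom_le_bimp _ _ _ Hc); auto.
Qed.

Lemma cut_separates_of_not_atom_le_Omega {X : Type} (tau : (X -> B4) -> Prop)
    (c : B4) (x y : X) :
  is_atom c -> ble c (Omega tau x y) = false ->
  exists l, tau l /\ cut l c x /\ ~ cut l c y.
Proof.
  intros Hc HO; apply NNPP; intros Hnsep.
  enough (ble c (Omega tau x y) = true) by congruence.
  apply (atom_le_Omega _ _ _ _ Hc); intros l Hl Hx.
  apply NNPP; intros Hy; apply Hnsep; now exists l.
Qed.

Lemma not_atom_le_Omega_of_T1 {X : Type} (tau : (X -> B4) -> Prop) (c : B4) (x y : X) :
  is_atom c -> T1space (cutTop tau c) -> x <> y -> ble c (Omega tau x y) = false.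
Proof.
  intros Hc HT Hxy; destruct (HT x y Hxy) as [U [[l [Hl ->]] [Ux Uy]]].
  destruct (ble c (Omega tau x y)) eqn:HO; [exfalso | reflexivity].
  exact (Uy (proj1 (atom_le_Omega _ _ _ _ Hc) HO l Hl Ux)).
Qed.

Lemma B4_eq1_of_atoms (a : B4) : ble Btt a = true -> ble Bff a = true -> a = B1.
Proof. destruct a; simpl; congruence. Qed.

Lemma B4_eq0_of_atoms (a : B4) : ble Btt a = false -> ble Bff a = false -> a = B0.
Proof. destruct a; simpl; congruence. Qed.

Lemma gen_top_subset {X : Type} (S : (X -> Prop) -> Prop) (U : X -> Prop) :
  S U -> gen_top S U.
Proof. intros HU T _ HST; exact (HST U HU). Qed.

Lemma Omega_eq0_of_T1_cuts {X : Type} (tau : (X -> B4) -> Prop) (x y : X) :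
  T1space (cutTop tau Btt) -> T1space (cutTop tau Bff) -> x <> y ->
  Omega tau x y = B0.
Proof.
  intros Htt Hff Hxy; apply B4_eq0_of_atoms;
  apply not_atom_le_Omega_of_T1; auto using atom_tt, atom_ff.
Qed.

Theorem mainTheorem14 (X : Type) (tau : (X -> B4) -> Prop) (Htau : is_Btopology tau) :
  (BT1 tau -> T1space (join_top (cutTop tau Btt) (cutTop tau Bff))) /\
  (T1space (cutTop tau Btt) -> T1space (cutTop tau Bff) -> BT1 tau).
Proof.
  split.
  - intros [HT0 HR0] x y Hxy.
    assert (HOmega : exists c, is_atom c /\ ble c (Omega tau x y) = false).
    { destruct (ble Btt (Omega tau x y)) eqn:Ett;
        [destruct (ble Bff (Omega tau x y)) eqn:Eff |];
        eauto using atom_tt, atom_ff.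
      exfalso; apply Hxy, HT0; [| rewrite <- HR0]; now apply B4_eq1_of_atoms. }
    destruct HOmega as [c [Hc HO]].
    destruct (cut_separates_of_not_atom_le_Omega _ _ _ _ Hc HO) as [l [Hl Hsep]].
    exists (cut l c); split; [apply gen_top_subset | exact Hsep].
    destruct Hc as [-> | ->]; [left | right]; now exists l.
  - intros Htt Hff; split.
    + intros x y Hxy _; apply NNPP; intros Hne.
      rewrite (Omega_eq0_of_T1_cuts _ _ _ Htt Hff Hne) in Hxy; discriminate.
    + intros x y; destruct (classic (x = y)) as [-> | Hne]; [reflexivity |].
      rewrite !Omega_eq0_of_T1_cuts; auto.
Qed.
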